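(* Let $q$ be odd with $q\equiv1\pmod 4$, and let $\delta\in\mathbb{F}_{q^8}^*$ with $\delta\neq\pm1$ and $\delta^2=-1$. Then $S(x)=x^q+\delta x^{q^5}$ is not a scattered polynomial of index $t$ over $\mathbb{F}_{q^8}$ for either $t=1$ or $t=5$.
   Context: An $\mathbb{F}_q$-linearized polynomial $S\in\mathbb{F}_{q^n}[x]$ is a scattered polynomial of index $t$ over $\mathbb{F}_{q^n}$ if for all $y,z\in\mathbb{F}_{q^n}^*$, $\frac{S(y)}{y^{q^t}}=\frac{S(z)}{z^{q^t}}$ implies $y/z\in\mathbb{F}_q$. *)

From HB Require Import structures.
From mathcomp Require Import all_boot all_order all_algebra all_field.
Set Implicit Arguments. Unset Strict Implicit. Unset Printing Implicit Defensive.
Import GRing.Theory.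
Local Open Scope ring_scope.

(* Membership in the subfield F_q of a finite field F (of order a power of q):
   the subfield of order q is exactly the set of fixed points of x |-> x^q. *)
Definition in_Fq (F : finFieldType) (q : nat) (x : F) : bool := x ^+ q == x.

Definition scattered (F : finFieldType) (q t : nat) (S : {poly F}) : Prop :=
  forall y z : F, y != 0 -> z != 0 ->
    S.[y] / y ^+ (q ^ t) = S.[z] / z ^+ (q ^ t) -> in_Fq q (y / z).

(* On the subfield F_{q^4} of F_{q^8} we have x^{q^5} = x^q, so S(x) = (1 + delta) x^q
   there and S(x)/x^{q^t} is the constant 1 + delta for both t = 1 and t = 5.  Any
   element of F_{q^4} outside F_q, compared with 1, therefore violates scatteredness;
   such an element is g^{q^4+1} for a generator g of the cyclic group F_{q^8}^*. *)
From HB Require Import structures.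
From mathcomp Require Import all_boot all_order all_algebra all_field.
From mathcomp Require cyclic.
Set Implicit Arguments. Unset Strict Implicit. Unset Printing Implicit Defensive.
Import GRing.Theory.
Local Open Scope ring_scope.

Lemma expf_card_pred (F : finFieldType) (x : F) : x != 0 -> x ^+ #|F|.-1 = 1.
Proof.
move=> x_neq0; apply: (mulfI x_neq0); rewrite -exprS mulr1.
by rewrite prednK ?expf_card // ltnW // finNzRing_gt1.
Qed.

Lemma finField_prim_root (F : finFieldType) :
  exists g : F, (#|F|.-1).-primitive_root g.
Proof.
set units := enum (predC1 (0 : F)).
have n_gt0 : (0 < #|F|.-1)%N by rewrite -subn1 subn_gt0 finNzRing_gt1.
have units_root : all (#|F|.-1).-unity_root units.
  by apply/allP => x; rewrite mem_enum unity_rootE => /expf_card_pred ->.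
have size_units : (#|F|.-1 <= size units)%N by rewrite -cardE cardC1.
have /hasP[g _ prim_g] := cyclic.has_prim_root n_gt0 units_root (enum_uniq _) size_units.
by exists g.
Qed.

Lemma finField_subfield_elem (F : finFieldType) (Q q : nat) :
  #|F| = (Q * Q)%N -> (1 < q < Q)%N -> exists2 w : F, w ^+ Q = w & w ^+ q != w.
Proof.
move=> cardF /andP[q_gt1 q_ltQ].
have [g] := finField_prim_root F; rewrite cardF => prim_g.
have factor_order : ((Q * Q).-1 = (Q + 1) * (Q - 1))%N.
  by rewrite mulnBr muln1 mulnDl mul1n subnDA addnK subn1.
pose w := g ^+ (Q + 1).
have fixed_expE m : (0 < m)%N -> (w ^+ m == w) = (Q - 1 %| m - 1)%N.
  move=> m_gt0; rewrite -exprM -[X in _ == g ^+ X]muln1 (eq_prim_root_expr prim_g).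
  rewrite eqn_mod_dvd ?leq_mul2l ?m_gt0 ?orbT // -mulnBr factor_order.
  by rewrite dvdn_pmul2l ?addn1.
have Q_gt0 : (0 < Q)%N := ltn_trans (ltnW q_gt1) q_ltQ.
exists w; first by apply/eqP; rewrite fixed_expE ?dvdnn.
have q_sub_lt : (q - 1 < Q - 1)%N := ltn_sub2r (ltn_trans q_gt1 q_ltQ) q_ltQ.
rewrite fixed_expE ?(ltnW q_gt1) //; apply: contraTN q_sub_lt => /dvdn_leq.
by rewrite subn_gt0 -leqNgt => /(_ q_gt1).
Qed.

Lemma not_scattered_of_ratio (F : finFieldType) (q t : nat) (S : {poly F}) (y : F) :
  y != 0 -> S.[y] = S.[1] * y ^+ (q ^ t) -> ~~ in_Fq q y -> ~ scattered q t S.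
Proof.
move=> y_neq0 Sy y_notin_Fq scatteredS; apply: (negP y_notin_Fq).
rewrite -[X in in_Fq _ X]divr1; apply: scatteredS; rewrite ?oner_neq0 //.
by rewrite Sy mulfK ?expf_neq0 // expr1n divr1.
Qed.

Theorem mainTheorem11 (q : nat) (F : finFieldType) :
  odd q -> (q %% 4 = 1)%N -> #|F| = (q ^ 8)%N ->
  forall delta : F, delta != 0 -> delta != 1 -> delta != -1 -> delta ^+ 2 = -1 ->
  let S : {poly F} := 'X^q + delta *: 'X^(q ^ 5) in
  ~ scattered q 1 S /\ ~ scattered q 5 S.
Proof.
move=> _ _ cardF delta _ _ _ _ S.
have q_gt1 : (1 < q)%N.
  by move: (finNzRing_gt1 F); rewrite cardF; case: (q) => [|[|n]]; rewrite ?exp1n.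
have q_lt_q4 : (q < q ^ 4)%N by rewrite -{1}[q]expn1 ltn_exp2l.
have cardF_sq : #|F| = (q ^ 4 * q ^ 4)%N by rewrite -expnD.
have [w w_q4 w_notin_Fq] :=
  finField_subfield_elem cardF_sq (introT andP (conj q_gt1 q_lt_q4)).
have w_q5 : w ^+ (q ^ 5) = w ^+ q by rewrite expnS mulnC exprM w_q4.
have w_neq0 : w != 0.
  by apply: contraNneq w_notin_Fq => ->; rewrite expr0n gtn_eqF // ltnW.
have S_w : S.[w] = S.[1] * w ^+ q.
  by rewrite !hornerE w_q5 !expr1n mulr1 mulrDl mul1r.
by split; apply: (not_scattered_of_ratio w_neq0); rewrite ?expn1 ?w_q5.
Qed.
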